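(* Let $\mathcal{T}$ be a conforming triangulation of a polygonal domain $\Omega\subset\mathbb{R}^2$ satisfying the mesh regularity condition of the context, with $P_1$ space $\mathcal V$, and let $A$ satisfy the standing assumptions (S). Let $w,u\in\mathcal V$ and $z(t)\in\mathcal V$ for $0\le t\le1$, let $v$ be the test function associated with $w$, and let $T\in\mathcal T_c$ have vertices $a_i,a_j,a_k$ ordered so that $w(a_i)\ge w(a_j)\ge w(a_k)$, with $w(a_i)>0$ and $w(a_k)\le0$; let $\theta_j$ be the interior angle of $T$ at $a_j$. Then $$\int_T\int_0^1\frac{\partial A}{\partial\eta}(x,z(t),\nabla u)\,w\,\nabla u^T\nabla v\,dt\,dx\ge-\frac{\delta_T(w)\,\delta_T(u)}{2\sin\theta_j}\,\frac{7K_\eta}{6}\,(1+r_T^{-1}).$$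
   Context: Setting: $\Omega\subset\mathbb{R}^2$ polygonal, $\partial\Omega=\Gamma_D\cup\Gamma_N$ with $\Gamma_D$ of positive measure; $\mathcal{T}$ a conforming triangulation resolving $\Gamma_D,\Gamma_N$; $\mathcal{D}$ the set of vertices of $\mathcal T$ not on $\Gamma_D$; $\mathcal{V}$ the continuous piecewise linear functions on $\mathcal T$ vanishing on $\Gamma_D$. Mesh regularity: there are $0<t_{min}\le t_{max}<\pi/2$ with every interior angle of every $T\in\mathcal T$ in $[t_{min},t_{max}]$. For $T$ with angles $\theta_1,\theta_2,\theta_3$, $r_T:=\min_{i,j}\sin\theta_i/\sin\theta_j$. For $\phi\in\mathcal V$, $\delta_T(\phi):=\max_{i,j\in\{1,2,3\}}|\phi(a_i)-\phi(a_j)|$ over the vertices $a_1,a_2,a_3$ of $T$. Test function: for $w\in\mathcal V$, $v\in\mathcal V$ is defined by $v(a)=1$ if $w(a)>0$ and $v(a)=0$ if $w(a)\le0$, for $a\in\mathcal D$. $\mathcal{T}_c$ is the set of $T\in\mathcal T$ on which $v$ is neither identically $1$ nor identically $0$. (S) $a(x,\eta,\xi)=A(x,\eta,\xi)\xi$ with $A:\Omega\times\mathbb R\times\mathbb R^2\to\mathbb R$; $a$ and $b(x,\eta)$ Carathéodory, $C^1$ in $(\eta,\xi)$ (resp. $\eta$) for a.e. $x$, measurable in $x$; there are $\gamma_a>0,K_\eta>0,B_\eta\ge0$ with, for a.e. $x$ and all $\eta,\xi,\zeta$: $\sum_{i,j}\frac{\partial a_i}{\partial\xi_j}(x,\eta,\xi)\zeta_i\zeta_j\ge\gamma_a|\zeta|^2$,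 $|\partial A/\partial\eta|\le K_\eta$, $0\le\partial b/\partial\eta\le B_\eta$. *)

From HB Require Import structures.
From mathcomp Require Import all_boot all_order all_algebra.
From mathcomp Require Import all_classical all_reals all_analysis.
Set Implicit Arguments. Unset Strict Implicit. Unset Printing Implicit Defensive.
Import Order.TTheory GRing.Theory Num.Theory.
Import numFieldNormedType.Exports.
Local Open Scope classical_set_scope.
Local Open Scope ring_scope.

Section Defs.
Variable R : realType.
Implicit Types (p q x ai aj ak : R * R).

Definition dot2 p q : R := p.1 * q.1 + p.2 * q.2.
Definition norm2 p : R := Num.sqrt (dot2 p p).
Definition det2 p q : R := p.1 * q.2 - p.2 * q.1.

Definition leb2 := ((@lebesgue_measure R) \x (@lebesgue_measure R))%E.

Definition triangle ai aj ak : set (R * R) :=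
  [set x | exists l1 l2 l3 : R, [/\ 0 <= l1, 0 <= l2, 0 <= l3,
     l1 + l2 + l3 = 1 & x = l1 *: ai + l2 *: aj + l3 *: ak]].

Definition angle_at (a b c : R * R) : R :=
  acos (dot2 (b - a) (c - a) / (norm2 (b - a) * norm2 (c - a))).

Definition bary ai aj ak x : R :=
  det2 (aj - x) (ak - x) / det2 (aj - ai) (ak - ai).

(** The P1 (affine) function on the triangle with vertex values fi fj fk
    (restriction to T of an element of V, extended affinely to R^2) *)
Definition p1 ai aj ak (fi fj fk : R) : R * R -> R :=
  fun x => fi * bary ai aj ak x + fj * bary aj ak ai x + fk * bary ak ai aj x.

Definition grad2 (f : R * R -> R) (x : R * R) : R * R :=
  ('D_((1, 0) : R * R) f x, 'D_((0, 1) : R * R) f x).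

Definition deltaT (fi fj fk : R) : R :=
  \big[Num.max/0]_(p <- [:: fi; fj; fk]) \big[Num.max/0]_(q <- [:: fi; fj; fk])
     `|p - q|.

Definition rT ai aj ak : R :=
  let s := [:: sin (angle_at ai aj ak); sin (angle_at aj ak ai);
               sin (angle_at ak ai aj)] in
  \big[Num.min/1]_(p <- s) \big[Num.min/1]_(q <- s) (p / q).

Definition hypS (Omega : set (R * R)) (A : R * R -> R -> R * R -> R)
  (b : R * R -> R -> R) (gam_a K_eta B_eta : R) : Prop :=
  [/\ [/\ 0 < gam_a, 0 < K_eta & 0 <= B_eta],
   ((forall eta xi, measurable_fun Omega (fun x => A x eta xi)) /\
    (forall eta, measurable_fun Omega (fun x => b x eta))),
   {ae leb2, forall x, Omega x ->
      (forall (P H : R * (R * R)),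
         derivable (fun Q : R * (R * R) => A x Q.1 Q.2 *: Q.2) P H) /\
      (forall H : R * (R * R),
         continuous (fun Q : R * (R * R) =>
           'D_H (fun Q : R * (R * R) => A x Q.1 Q.2 *: Q.2) Q)) /\
      (forall eta xi, derivable (fun e => A x e xi) eta 1) /\
      (forall eta, derivable (b x) eta 1) /\
      continuous (fun eta => derive1 (b x) eta)} &
   {ae leb2, forall x, Omega x ->
      (forall eta xi zeta,
         gam_a * dot2 zeta zeta <=
         dot2 ('D_zeta (fun xi' => A x eta xi' *: xi') xi) zeta) /\
      (forall eta xi, `|derive1 (fun e => A x e xi) eta| <= K_eta) /\
      (forall eta, 0 <= derive1 (b x) eta <= B_eta)}].

End Defs.

(* On T the gradients of the P1 functions u and v are constant, |dA/deta| <= K_eta,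
   and w takes values between w(a_k) <= 0 < w(a_i), so |w| <= delta_T(w): the
   integrand is bounded below by -K_eta delta_T(w) |grad u . grad v|, and the
   integral by that bound times |T|.  As v is a hat function phi_i or 1 - phi_k,
   the acute angles give |grad u . grad v| <= delta_T(u) e^2 / (2|T|)^2, where
   e = |a_j a_k| or |a_i a_j| is an edge at a_j.  By the law of sines r_T bounds
   the ratio of these two edges, whence e^2 <= |a_i a_j| |a_j a_k| / r_T, and
   1 / r_T <= (7/6) (1 + 1 / r_T) concludes.
   No measurability of the integrand is needed: a Lebesgue integral of a function
   bounded below by -M over a set whose measurable subsets have measure <= a is
   at least -M a.  The area of T is bounded by slicing it vertically: the slice
   lengths form a tent function of the abscissa. *)
From HB Require Import structures.
From mathcomp Require Import all_boot all_order all_algebra.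
From mathcomp Require Import all_classical all_reals all_analysis.
From mathcomp Require Import ring lra.
Set Implicit Arguments. Unset Strict Implicit. Unset Printing Implicit Defensive.
Import Order.TTheory GRing.Theory Num.Theory.
Import numFieldNormedType.Exports.
Import measurable_realfun HBNNSimple.
Local Open Scope classical_set_scope.
Local Open Scope ring_scope.

Section integral_lower_bound.
Context {d} {T : measurableType d} {R : realType}.
Variable mu : {measure set T -> \bar R}.

Lemma ge0_integral_le_bound (D : set T) (G : T -> \bar R) (M a : R) :
  0 <= M -> (forall x, D x -> 0 <= G x)%E ->
  {ae mu, forall x, D x -> (G x <= M%:E)%E} ->
  (forall B, measurable B -> B `<=` D -> (mu B <= a%:E)%E) ->
  (\int[mu]_(x in D) G x <= (M * a)%:E)%E.
Proof.
move=> M0 G0 GM muD; rewrite ge0_integralE//.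
apply: ge_ereal_sup => _ [h /= hG <-].
pose S := h @^-1` `]0%R, +oo[.
have mS : measurable S by exact: measurable_sfunP.
have SD : S `<=` D.
  move=> x; rewrite /S /= in_itv /= andbT => hx; move: (hG x).
  rewrite /patch; case: ifPn => [/set_mem //|_].
  by rewrite lee_fin leNgt hx.
have -> : sintegral mu h = (\int[mu]_x (h x)%:E)%E.
  by rewrite integral_nnsfun // patch_setT.
apply: (@le_trans _ _ (\int[mu]_x (M * \1_S x)%:E)%E).
  apply: ae_ge0_le_integral => //.
  - by move=> x _; rewrite lee_fin.
  - by apply/measurable_EFinP; exact: measurable_funPT.
  - by move=> x _; rewrite lee_fin mulr_ge0 // indic_ge0.
  - by apply/measurable_EFinP; apply: measurable_funM => //; exact: measurable_indic.
  apply: filterS GM => x GxM _; rewrite indicE.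
  have [/set_mem Sx|nSx] := boolP (x \in S).
    rewrite mulr1; apply: le_trans (GxM (SD _ Sx)); move: (hG x).
    by rewrite /patch mem_set //; exact: SD.
  rewrite mulr0 lee_fin leNgt; apply/negP => hx; apply/negP: nSx.
  by rewrite negbK; apply/mem_set; rewrite /S /= in_itv /= hx.
under eq_integral do rewrite EFinM.
rewrite ge0_integralZl_EFin //; last by apply/measurable_EFinP; exact: measurable_indic.
rewrite integral_indic // setIT EFinM.
by apply: lee_wpmul2l; [rewrite lee_fin | exact: muD].
Qed.

Lemma integral_ge_lbound (D : set T) (F : T -> \bar R) (M a : R) :
  0 <= M -> {ae mu, forall x, D x -> ((- M)%:E <= F x)%E} ->
  (forall B, measurable B -> B `<=` D -> (mu B <= a%:E)%E) ->
  ((- (M * a))%:E <= \int[mu]_(x in D) F x)%E.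
Proof.
move=> M0 FM muD; rewrite integralE EFinN -(sub0e (M * a)%:E).
apply: leeB; first by apply: integral_ge0 => x _; exact: funepos_ge0.
apply: ge0_integral_le_bound => //.
apply: filterS FM => x FxM Dx; rewrite funenegE ge_max lee_fin M0 andbT.
by rewrite leeNl -EFinN; exact: FxM.
Qed.

End integral_lower_bound.

Section lebesgue_bounds.
Variable R : realType.

Lemma integral_itv01_lbound (f : R -> R) (M : R) : (forall t, `|f t| <= M) ->
  ((- M)%:E <= \int[lebesgue_measure]_(t in `[0%R, 1%R]) (f t)%:E)%E.
Proof.
move=> fM; have M0 : 0 <= M := le_trans (normr_ge0 _) (fM 0).
rewrite -[M]mulr1; apply: integral_ge_lbound => //.
  by apply: aeW => t _; rewrite lee_fin; have := fM t; rewrite ler_norml => /andP[].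
move=> B mB B01.
apply: le_trans (_ : _ <= lebesgue_measure [set` `[0%R, 1%R]])%E _.
  by apply: le_measure; rewrite ?inE.
by rewrite lebesgue_measure_itv /= lte_fin ltr01 sube0.
Qed.

Lemma lebesgue_measure_le_width (E : set R) (h : R) : measurable E -> 0 <= h ->
  (forall y y', E y -> E y' -> y - y' <= h) -> (lebesgue_measure E <= h%:E)%E.
Proof.
move=> mE h0 hE.
have [->|/set0P [y0 Ey0]] := eqVneq E set0; first by rewrite measure0 lee_fin.
have lbE : has_lbound E by exists (y0 - h) => y Ey; have := hE y0 y Ey0 Ey; lra.
have le_inf y : E y -> y <= inf E + h.
  move=> Ey; suff : y - h <= inf E by lra.
  by apply: lb_le_inf; [exists y0 | move=> y' Ey'; have := hE y y' Ey Ey'; lra].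
apply: (@le_trans _ _ (lebesgue_measure [set` `[inf E, inf E + h]])).
  apply: le_measure; rewrite ?inE //= => y Ey.
  by rewrite /= in_itv /= le_inf // andbT; exact: inf_lbound.
rewrite lebesgue_measure_itv; case: ifPn => _; last by rewrite lee_fin.
by rewrite -EFinD lee_fin addrAC subrr add0r.
Qed.

Lemma continuous_is_derive (g dg : R -> R) :
  (forall s, is_derive s (1 : R) g (dg s)) -> continuous g.
Proof.
move=> dg_g s; apply: differentiable_continuous; apply/derivable1_diffP.
exact: (@ex_derive _ _ _ _ _ _ _ (dg_g s)).
Qed.

Lemma integral_itv_le_trapezoid (f : R -> \bar R) (a b fa fb : R) : a <= b ->
  measurable_fun `[a, b] f -> (forall s, a <= s <= b -> (0 <= f s)%E) ->
  (a < b -> forall s, a <= s <= b ->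
     (f s <= ((fa * (b - s) + fb * (s - a)) / (b - a))%:E)%E) ->
  (\int[lebesgue_measure]_(s in `[a, b]) f s <= ((b - a) * (fa + fb) / 2)%:E)%E.
Proof.
rewrite le_eqVlt => /orP[/eqP <-|ab] mf f0 fle.
  by rewrite set_itv1 integral_set1 subrr !mul0r.
have ba0 : b - a != 0 by rewrite subr_eq0 gt_eqF.
pose g s := (fa * (b - s) + fb * (s - a)) / (b - a).
pose G s := (fb * (s - a) ^+ 2 - fa * (b - s) ^+ 2) / (2 * (b - a)).
have dG (s : R) : is_derive s (1 : R) G (g s).
  by apply: is_derive_eq; rewrite /GRing.scale /= /g; field.
have cG : continuous G := continuous_is_derive dG.
have cg : continuous g.
  apply: (@continuous_is_derive _ (fun=> (fb - fa) / (b - a))) => s.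
  by apply: is_derive_eq; rewrite /GRing.scale /=; field.
apply: le_trans (_ : _ <= \int[lebesgue_measure]_(s in `[a, b]) (g s)%:E)%E _.
  apply: ge0_le_integral => //.
  - by apply/measurable_EFinP; apply: measurable_funTS; exact: continuous_measurable_fun.
  - by move=> s; rewrite /= in_itv /=; exact: fle.
rewrite (@continuous_FTC2 _ g G) //.
- rewrite -EFinB lee_fin le_eqVlt; apply/orP; left; apply/eqP.
  by rewrite /G; field.
- exact: continuous_subspaceT.
- split; first by move=> s _; exact: (@ex_derive _ _ _ _ _ _ _ (dG s)).
    exact: cvg_at_right_filter (cG a).
  exact: cvg_at_left_filter (cG b).
- by move=> s _; rewrite derive1E; exact: (@derive_val _ _ _ _ _ _ _ (dG s)).
Qed.

End lebesgue_bounds.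

Section triangle_area.
Variable R : realType.
Implicit Types (a b c p q : R * R) (B : set (R * R)).

Lemma triangle_swap12 a b c : triangle a b c = triangle b a c.
Proof.
suff sub (x y z : R * R) : triangle x y z `<=` triangle y x z.
  by apply/seteqP; split; exact: sub.
move=> _ [l1 [l2 [l3 [? ? ? hs ->]]]]; exists l2, l1, l3; split => //.
  by rewrite (addrC l2).
by rewrite (addrC (l2 *: y)).
Qed.

Lemma triangle_swap23 a b c : triangle a b c = triangle a c b.
Proof.
suff sub (x y z : R * R) : triangle x y z `<=` triangle x z y.
  by apply/seteqP; split; exact: sub.
move=> _ [l1 [l2 [l3 [? ? ? hs ->]]]]; exists l1, l3, l2; split => //.
  by rewrite -addrA (addrC l3) addrA.
by rewrite -!addrA (addrC (l2 *: y)).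
Qed.

Lemma normr_det2_swap12 a b c :
  `|det2 (a - b) (c - b)| = `|det2 (b - a) (c - a)|.
Proof. by rewrite -normrN; congr `|_|; rewrite /det2 /=; ring. Qed.

Lemma normr_det2_swap23 a b c :
  `|det2 (c - a) (b - a)| = `|det2 (b - a) (c - a)|.
Proof. by rewrite -normrN; congr `|_|; rewrite /det2 /=; ring. Qed.

Lemma triangle_sort a b c : exists a' b' c', [/\ a'.1 <= b'.1 <= c'.1,
  triangle a' b' c' = triangle a b c &
  `|det2 (b' - a') (c' - a')| = `|det2 (b - a) (c - a)|].
Proof.
wlog ab : a b / a.1 <= b.1.
  move=> sorted; have [|/ltW ba] := leP a.1 b.1; first exact: sorted.
  have [a' [b' [c' [s Ta' Da']]]] := sorted b a ba.
  by exists a', b', c'; rewrite Ta' Da' -triangle_swap12 normr_det2_swap12.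
have [bc|cb] := leP b.1 c.1; first by exists a, b, c; rewrite ab bc.
have [ac|ca] := leP a.1 c.1.
  by exists a, c, b; rewrite ac (ltW cb) -triangle_swap23 normr_det2_swap23.
exists c, a, b; rewrite (ltW ca) ab triangle_swap12 -triangle_swap23.
by rewrite normr_det2_swap12 normr_det2_swap23.
Qed.

Lemma triangle_abscissa {a b c p} {l1 l2 l3 : R} : a.1 <= b.1 <= c.1 ->
  0 <= l1 -> 0 <= l2 -> 0 <= l3 -> l1 + l2 + l3 = 1 ->
  p = l1 *: a + l2 *: b + l3 *: c ->
  [/\ a.1 <= p.1 <= c.1, l2 * (b.1 - a.1) <= p.1 - a.1
    & l2 * (c.1 - b.1) <= c.1 - p.1].
Proof.
move=> /andP[ab bc] l10 l20 l30 hs ->.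
have -> : (l1 *: a + l2 *: b + l3 *: c).1 = l1 * a.1 + l2 * b.1 + l3 * c.1 by [].
have -> : l1 = 1 - l2 - l3 by lra.
split; first (apply/andP; split); nra.
Qed.

Lemma det2_vertical_chord {a b c p q} {l1 l2 l3 m1 m2 m3 : R} :
  l1 + l2 + l3 = 1 -> m1 + m2 + m3 = 1 ->
  p = l1 *: a + l2 *: b + l3 *: c -> q = m1 *: a + m2 *: b + m3 *: c ->
  p.1 = q.1 -> (p.2 - q.2) * (c.1 - a.1) = (m2 - l2) * det2 (b - a) (c - a).
Proof.
move=> hl hm -> ->; rewrite /det2 /= /GRing.scale /= => e1.
have el1 : l1 = 1 - l2 - l3 by lra.
have em1 : m1 = 1 - m2 - m3 by lra.
have e : (l2 - m2) * (b.1 - a.1) + (l3 - m3) * (c.1 - a.1) = 0.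
  transitivity ((l1 * a.1 + l2 * b.1 + l3 * c.1) - (m1 * a.1 + m2 * b.1 + m3 * c.1)).
    by rewrite el1 em1; ring.
  by rewrite e1 subrr.
apply/eqP; rewrite -subr_eq0; apply/eqP.
transitivity ((c.2 - a.2) * ((l2 - m2) * (b.1 - a.1) + (l3 - m3) * (c.1 - a.1))).
  by rewrite el1 em1; ring.
by rewrite e mulr0.
Qed.

Lemma leb2_integral_xsection B (lo hi : R) : (forall p, B p -> lo <= p.1 <= hi) ->
  (@leb2 R) B = (\int[lebesgue_measure]_(s in `[lo, hi]) lebesgue_measure (xsection B s))%E.
Proof.
move=> B_itv; rewrite /leb2 /product_measure1 /= [RHS]integral_mkcond.
apply: eq_integral => s _; rewrite /patch; case: ifPn => // /negP s_out.
rewrite [xsection B s](_ : _ = set0) ?measure0 //; apply/seteqP; split => // y.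
by rewrite /xsection /= inE => /B_itv s_itv; apply: s_out; rewrite inE /= in_itv.
Qed.

Lemma lebesgue_xsection_triangle_le a b c B (s psi : R) :
  a.1 < c.1 -> measurable B -> B `<=` triangle a b c -> 0 <= psi ->
  (forall p (l1 l2 l3 : R), 0 <= l1 -> 0 <= l2 -> 0 <= l3 -> l1 + l2 + l3 = 1 ->
     p = l1 *: a + l2 *: b + l3 *: c -> p.1 = s -> l2 <= psi) ->
  (lebesgue_measure (xsection B s)
     <= (`|det2 (b - a) (c - a)| / (c.1 - a.1) * psi)%:E)%E.
Proof.
move=> ac mB BT psi0 l2_le.
apply: lebesgue_measure_le_width; first exact: measurable_xsection.
  by rewrite !mulr_ge0 // invr_ge0 subr_ge0 ltW.
move=> y y'; rewrite /xsection /= !inE.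
move=> /BT [l1 [l2 [l3 [l10 l20 l30 hl el]]]] /BT [m1 [m2 [m3 [m10 m20 m30 hm em]]]].
have chord := det2_vertical_chord hl hm el em erefl; rewrite /= in chord.
rewrite mulrAC ler_pdivlMr ?subr_gt0 // chord.
apply: le_trans (ler_norm _) _; rewrite normrM mulrC ler_wpM2l //.
have := l2_le _ _ _ _ l10 l20 l30 hl el erefl.
have := l2_le _ _ _ _ m10 m20 m30 hm em erefl.
by rewrite ler_norml; lra.
Qed.

Lemma sorted_triangle_lt a b c : a.1 <= b.1 <= c.1 -> det2 (b - a) (c - a) != 0 ->
  a.1 < c.1.
Proof.
move=> /andP[ab bc] D0; rewrite lt_neqAle (le_trans ab bc) andbT.
apply: contraNneq D0 => ac; have ba : b.1 = a.1 by lra.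
by apply/eqP; rewrite /det2 /= ba -ac; ring.
Qed.

Lemma leb2_sorted_triangle_le a b c B :
  a.1 <= b.1 <= c.1 -> det2 (b - a) (c - a) != 0 -> measurable B ->
  B `<=` triangle a b c -> ((@leb2 R) B <= (`|det2 (b - a) (c - a)| / 2)%:E)%E.
Proof.
move=> abc D0 mB BT; have /andP[ab bc] := abc; have ac := sorted_triangle_lt abc D0.
set kappa := `|det2 (b - a) (c - a)| / (c.1 - a.1).
have kappa0 : 0 <= kappa by rewrite divr_ge0 // subr_ge0 ltW.
rewrite (@leb2_integral_xsection _ a.1 c.1); last first.
  move=> p /BT [l1 [l2 [l3 [l10 l20 l30 hl el]]]].
  by have [] := triangle_abscissa abc l10 l20 l30 hl el.
have mxBT := measurable_fun_xsection (@lebesgue_measure R) mB.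
have mxB (I : set R) : measurable_fun I (fun s => lebesgue_measure (xsection B s)).
  exact: measurable_funS mxBT.
rewrite (@itv_bndbnd_setU _ _ _ (BRight b.1)) ?bnd_simp //.
rewrite ge0_integral_setU //; last 2 first.
- exact: mxB.
- by rewrite disj_set2E; apply/eqP/seteqP; split => // s [] /=; rewrite !in_itv /=; lra.
have rising : (\int[lebesgue_measure]_(s in `[a.1, b.1]) lebesgue_measure (xsection B s)
    <= ((b.1 - a.1) * (0 + kappa) / 2)%:E)%E.
  apply: integral_itv_le_trapezoid => // ab' s /andP[a_s _].
  rewrite mul0r add0r -mulrA.
  apply: lebesgue_xsection_triangle_le => // [|p l1 l2 l3 l10 l20 l30 hl ep ps].
    by rewrite divr_ge0 // subr_ge0 // ltW.
  have [_ + _] := triangle_abscissa abc l10 l20 l30 hl ep.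
  by rewrite ps ler_pdivlMr ?subr_gt0.
have falling : (\int[lebesgue_measure]_(s in `]b.1, c.1]) lebesgue_measure (xsection B s)
    <= ((c.1 - b.1) * (kappa + 0) / 2)%:E)%E.
  apply: le_trans (_ : _ <= \int[lebesgue_measure]_(s in `[b.1, c.1])
                               lebesgue_measure (xsection B s))%E _.
    apply: ge0_subset_integral => //; first exact: mxB.
    by move=> s; rewrite /= !in_itv /= => /andP[/ltW -> ->].
  apply: integral_itv_le_trapezoid => // bc' s /andP[_ s_c].
  rewrite mul0r addr0 -mulrA.
  apply: lebesgue_xsection_triangle_le => // [|p l1 l2 l3 l10 l20 l30 hl ep ps].
    by rewrite divr_ge0 // subr_ge0 // ltW.
  have [_ _] := triangle_abscissa abc l10 l20 l30 hl ep.
  by rewrite ps ler_pdivlMr ?subr_gt0.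
apply: le_trans (leeD rising falling) _.
rewrite -EFinD lee_fin le_eqVlt; apply/orP; left; apply/eqP.
by rewrite /kappa; field; rewrite subr_eq0 gt_eqF.
Qed.

Lemma leb2_triangle_le a b c B :
  det2 (b - a) (c - a) != 0 -> measurable B -> B `<=` triangle a b c ->
  ((@leb2 R) B <= (`|det2 (b - a) (c - a)| / 2)%:E)%E.
Proof.
move=> D0 mB; have [a' [b' [c' [abc <- Dabc]]]] := triangle_sort a b c.
rewrite -Dabc => BT; apply: leb2_sorted_triangle_le => //.
by rewrite -normr_eq0 Dabc normr_eq0.
Qed.

End triangle_area.

Lemma derive_affine (R : realType) (f : R * R -> R) (x v : R * R) (c : R) :
  (forall h : R, f (x + h *: v) = f x + h * c) -> 'D_v f x = c.
Proof.
move=> hf; rewrite /derive; apply: cvg_lim => //; apply: cvg_near_cst.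
near=> h; rewrite /= (addrC (h *: v)) hf addrAC subrr add0r /GRing.scale /=.
by rewrite mulrA mulVf ?mul1r //; near: h; exact: nbhs_dnbhs_neq.
Unshelve. all: by end_near.
Qed.

Section p1_functions.
Variable R : realType.
Implicit Types (a b c x v : R * R).

Definition p1_grad a b c (fa fb fc : R) : R * R :=
  ((fa * (b.2 - c.2) + fb * (c.2 - a.2) + fc * (a.2 - b.2)) / det2 (b - a) (c - a),
   (fa * (c.1 - b.1) + fb * (a.1 - c.1) + fc * (b.1 - a.1)) / det2 (b - a) (c - a)).

Lemma det2_rot a b c : det2 (c - b) (a - b) = det2 (b - a) (c - a).
Proof. by rewrite /det2 /=; ring. Qed.

Lemma det2_rot_neq0 {a b c} : det2 (b - a) (c - a) != 0 ->
  det2 (c - b) (a - b) != 0 /\ det2 (a - c) (b - c) != 0.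
Proof. by move=> D0; rewrite (det2_rot b c a) (det2_rot a b c). Qed.

Lemma p1_shift a b c (fa fb fc : R) x v (h : R) : det2 (b - a) (c - a) != 0 ->
  p1 a b c fa fb fc (x + h *: v) =
  p1 a b c fa fb fc x + h * dot2 v (p1_grad a b c fa fb fc).
Proof.
move=> D0; have [D1 D2] := det2_rot_neq0 D0.
rewrite /p1 /bary /p1_grad /dot2.
by move: D0 D1 D2; rewrite /det2 /= /GRing.scale /= => D0 D1 D2; field; rewrite ?D0 ?D1 ?D2.
Qed.

Lemma grad2_p1 a b c (fa fb fc : R) x : det2 (b - a) (c - a) != 0 ->
  grad2 (p1 a b c fa fb fc) x = p1_grad a b c fa fb fc.
Proof.
move=> D0; rewrite /grad2; congr pair; apply: derive_affine => h;
  by rewrite p1_shift // /dot2 /=; ring.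
Qed.

Lemma p1_convex_comb a b c (fa fb fc l1 l2 l3 : R) : det2 (b - a) (c - a) != 0 ->
  l1 + l2 + l3 = 1 ->
  p1 a b c fa fb fc (l1 *: a + l2 *: b + l3 *: c) = l1 * fa + l2 * fb + l3 * fc.
Proof.
move=> D0 hl; have [D1 D2] := det2_rot_neq0 D0; have -> : l1 = 1 - l2 - l3 by lra.
rewrite /p1 /bary.
by move: D0 D1 D2; rewrite /det2 /= /GRing.scale /= => D0 D1 D2; field; rewrite ?D0 ?D1 ?D2.
Qed.

Lemma deltaT_ge (fa fb fc : R) : [/\ `|fa - fb| <= deltaT fa fb fc,
  `|fa - fc| <= deltaT fa fb fc & `|fb - fc| <= deltaT fa fb fc].
Proof. by rewrite /deltaT !big_cons !big_nil !le_max !lexx !orbT. Qed.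

Lemma normr_p1_le_deltaT a b c (fa fb fc : R) x : det2 (b - a) (c - a) != 0 ->
  fc <= fb <= fa -> fc <= 0 <= fa -> triangle a b c x ->
  `|p1 a b c fa fb fc x| <= deltaT fa fb fc.
Proof.
move=> D0 /andP[cb ba] /andP[c0 a0] [l1 [l2 [l3 [l10 l20 l30 hl ->]]]].
have [_ dac _] := deltaT_ge fa fb fc; apply: le_trans dac.
apply: le_trans (ler_norm _); rewrite p1_convex_comb // ler_norml.
have -> : l1 = 1 - l2 - l3 by lra.
by apply/andP; split; nra.
Qed.

End p1_functions.

Section angles.
Variable R : realType.
Implicit Types (a b c p q : R * R).

Lemma dot2_sqr_add_det2_sqr p q :
  dot2 p q ^+ 2 + det2 p q ^+ 2 = dot2 p p * dot2 q q.
Proof. by rewrite /dot2 /det2; ring. Qed.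

Lemma dot2_ge0 p : 0 <= dot2 p p.
Proof. by rewrite /dot2; nra. Qed.

Lemma norm2_sqr p : norm2 p ^+ 2 = dot2 p p.
Proof. by rewrite /norm2 sqr_sqrtr // dot2_ge0. Qed.

Lemma norm2_subC p q : norm2 (p - q) = norm2 (q - p).
Proof. by rewrite /norm2 /dot2 /=; congr Num.sqrt; ring. Qed.

Lemma norm2_gt0 {p q} : det2 p q != 0 -> 0 < norm2 p /\ 0 < norm2 q.
Proof.
move=> D0; have := dot2_sqr_add_det2_sqr p q.
have := dot2_ge0 p; have := dot2_ge0 q; have := sqr_ge0 (dot2 p q).
have : 0 < det2 p q ^+ 2 by rewrite exprn_even_gt0.
rewrite /norm2 !sqrtr_gt0 => ? ? ? ? ?; split; rewrite lt_neqAle eq_sym dot2_ge0 andbT;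
  apply: contraTneq isT => e; nra.
Qed.

Lemma cos_sin_angle_at {a b c} : det2 (b - a) (c - a) != 0 ->
  let N := norm2 (b - a) * norm2 (c - a) in
  cos (angle_at a b c) = dot2 (b - a) (c - a) / N /\
  sin (angle_at a b c) = `|det2 (b - a) (c - a)| / N.
Proof.
move=> D0 N; have [pn qn] := norm2_gt0 D0.
have N0 : 0 < N by rewrite mulr_gt0.
set t := dot2 (b - a) (c - a) / N.
have t_sqr : t ^+ 2 + (det2 (b - a) (c - a) / N) ^+ 2 = 1.
  rewrite !expr_div_n -mulrDl dot2_sqr_add_det2_sqr -!norm2_sqr -exprMn.
  by rewrite divff // expf_neq0 // gt_eqF.
have t_itv : -1 <= t <= 1.
  have := sqr_ge0 (det2 (b - a) (c - a) / N) => ?.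
  by apply/andP; split; nra.
rewrite /angle_at -/N -/t acosK ?in_itv //; split => //.
rewrite sin_acos // (_ : 1 - _ = (det2 (b - a) (c - a) / N) ^+ 2); last by lra.
by rewrite sqrtr_sqr normrM normfV (gtr0_norm N0).
Qed.

Lemma dot2_gt0_acute a b c (t_min t_max : R) : det2 (b - a) (c - a) != 0 ->
  0 < t_min -> t_max < pi / 2 -> t_min <= angle_at a b c <= t_max ->
  0 < dot2 (b - a) (c - a).
Proof.
move=> D0 tmin0 tmax /andP[tmin_le le_tmax].
have [pn qn] := norm2_gt0 D0; have [cosE _] := cos_sin_angle_at D0.
have : 0 < cos (angle_at a b c).
  by apply: cos_gt0_pihalf; have := pi_gt0 R => ?; apply/andP; split; lra.
by rewrite cosE pmulr_lgt0 // invr_gt0 mulr_gt0.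
Qed.

Lemma rT_bounds a b c : 0 < sin (angle_at a b c) -> 0 < sin (angle_at b c a) ->
  0 < sin (angle_at c a b) -> [/\ 0 < rT a b c,
  rT a b c <= sin (angle_at a b c) / sin (angle_at c a b) &
  rT a b c <= sin (angle_at c a b) / sin (angle_at a b c)].
Proof.
rewrite /rT !big_cons !big_nil => sa sb sc.
by split; rewrite ?lt_min ?ltr01 ?divr_gt0 // !ge_min lexx !orbT.
Qed.

Lemma rT_edge_bounds (ai aj ak : R * R) : det2 (aj - ai) (ak - ai) != 0 ->
  [/\ 0 < rT ai aj ak, rT ai aj ak * norm2 (ai - aj) <= norm2 (ak - aj)
    & rT ai aj ak * norm2 (ak - aj) <= norm2 (ai - aj)].
Proof.
move=> D0; have [DJ DK] := det2_rot_neq0 D0.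
have [_ sI] := cos_sin_angle_at D0; have [_ sJ] := cos_sin_angle_at DJ.
have [_ sK] := cos_sin_angle_at DK.
rewrite (norm2_subC aj ai) (norm2_subC ak ai) in sI; rewrite det2_rot in sJ.
rewrite (det2_rot aj ak ai) det2_rot (norm2_subC aj ak) in sK.
have [_ nIJ] := norm2_gt0 DJ; have [nIK nJK] := norm2_gt0 DK.
rewrite norm2_subC in nJK.
have Dn : 0 < `|det2 (aj - ai) (ak - ai)| by rewrite normr_gt0.
have [|||r0 rIK rKI] := rT_bounds (a := ai) (b := aj) (c := ak);
  rewrite ?sI ?sJ ?sK ?divr_gt0 ?mulr_gt0 //.
split => //; rewrite -ler_pdivlMr //; [move: rIK | move: rKI];
  rewrite sI sK => /le_trans; apply; rewrite le_eqVlt; apply/orP; left; apply/eqP;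
  by field; rewrite !gt_eqF.
Qed.

End angles.

Section gradient_bounds.
Variable R : realType.
Implicit Types (a b c ai aj ak : R * R).

Lemma p1_grad_rot a b c (fa fb fc : R) :
  p1_grad a b c fa fb fc = p1_grad b c a fb fc fa.
Proof. by rewrite /p1_grad (det2_rot a b c); congr pair; ring. Qed.

Lemma p1_grad_110 a b c : p1_grad a b c 1 1 0 = - p1_grad c a b 1 0 0.
Proof.
rewrite /p1_grad (det2_rot b c a) (det2_rot a b c) /=.
by congr pair; rewrite -mulNr; congr (_ / _); ring.
Qed.

Lemma normr_dot2_p1_grad_hat_le a b c (fa fb fc e : R) :
  det2 (b - a) (c - a) != 0 ->
  0 <= dot2 (a - c) (b - c) -> 0 <= dot2 (c - b) (a - b) ->
  `|fa - fb| <= e -> `|fa - fc| <= e ->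
  `|dot2 (p1_grad a b c fa fb fc) (p1_grad a b c 1 0 0)|
    <= e * norm2 (c - b) ^+ 2 / det2 (b - a) (c - a) ^+ 2.
Proof.
move=> D0 dotC dotB fab fac.
have -> : dot2 (p1_grad a b c fa fb fc) (p1_grad a b c 1 0 0) =
    ((fa - fb) * dot2 (a - c) (b - c) + (fa - fc) * dot2 (c - b) (a - b))
    / det2 (b - a) (c - a) ^+ 2.
  by move: D0; rewrite /p1_grad /dot2 /det2 /= => D0; field.
have -> : norm2 (c - b) ^+ 2 = dot2 (a - c) (b - c) + dot2 (c - b) (a - b).
  by rewrite norm2_sqr /dot2 /=; ring.
rewrite normrM normfV (ger0_norm (sqr_ge0 _)) ler_pM2r ?invr_gt0 ?exprn_even_gt0 //.
apply: le_trans (ler_normD _ _) _.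
rewrite !normrM (ger0_norm dotC) (ger0_norm dotB) [in X in _ <= X]mulrDr.
by apply: lerD; apply: ler_wpM2r.
Qed.

Lemma sqr_le_mulV (x y r : R) : 0 < x -> 0 < r -> r * x <= y -> x ^+ 2 <= x * y / r.
Proof. by move=> x0 r0 rxy; rewrite expr2 -mulrA ler_pM2l // ler_pdivlMr // mulrC. Qed.

Lemma normr_dot2_grad_test_le_edges ai aj ak (ui uj uk vj du : R) :
  det2 (aj - ai) (ak - ai) != 0 ->
  0 < dot2 (aj - ai) (ak - ai) -> 0 < dot2 (ak - aj) (ai - aj) ->
  0 < dot2 (ai - ak) (aj - ak) -> vj = 0 \/ vj = 1 ->
  `|ui - uj| <= du -> `|ui - uk| <= du -> `|uj - uk| <= du ->
  `|dot2 (p1_grad ai aj ak ui uj uk) (p1_grad ai aj ak 1 vj 0)|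
    <= du * (norm2 (ak - aj) * norm2 (ai - aj) / rT ai aj ak)
       / det2 (aj - ai) (ak - ai) ^+ 2.
Proof.
move=> D0 dotI dotJ dotK vj01 uij uik ujk.
have [DJ DK] := det2_rot_neq0 D0; have [nJK nIJ] := norm2_gt0 DJ.
have [r0 rIJ rJK] := rT_edge_bounds D0.
have du0 : 0 <= du := le_trans (normr_ge0 _) uij.
case: vj01 => ->.
  apply: le_trans (normr_dot2_p1_grad_hat_le D0 (ltW dotK) (ltW dotJ) uij uik) _.
  rewrite ler_pM2r ?invr_gt0 ?exprn_even_gt0 // ler_wpM2l //.
  exact: sqr_le_mulV nJK r0 rJK.
have dot2N p q : dot2 p (- q) = - dot2 p q by rewrite /dot2 /=; ring.
have DKE : det2 (ai - ak) (aj - ak) = det2 (aj - ai) (ak - ai).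
  by rewrite (det2_rot aj ak ai) det2_rot.
rewrite p1_grad_110 (p1_grad_rot ai) (p1_grad_rot aj) dot2N normrN -DKE.
have uki : `|uk - ui| <= du by rewrite distrC.
have ukj : `|uk - uj| <= du by rewrite distrC.
apply: le_trans (normr_dot2_p1_grad_hat_le DK (ltW dotJ) (ltW dotI) uki ukj) _.
rewrite ler_pM2r ?invr_gt0 ?exprn_even_gt0 // ler_wpM2l // norm2_subC.
by rewrite (mulrC (norm2 (ak - aj))); exact: sqr_le_mulV nIJ r0 rIJ.
Qed.

Lemma normr_dot2_grad_test_le ai aj ak (ui uj uk vj du t_min t_max : R) :
  det2 (aj - ai) (ak - ai) != 0 -> 0 < t_min -> t_max < pi / 2 ->
  t_min <= angle_at ai aj ak <= t_max -> t_min <= angle_at aj ak ai <= t_max ->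
  t_min <= angle_at ak ai aj <= t_max -> vj = 0 \/ vj = 1 ->
  `|ui - uj| <= du -> `|ui - uk| <= du -> `|uj - uk| <= du ->
  `|dot2 (p1_grad ai aj ak ui uj uk) (p1_grad ai aj ak 1 vj 0)|
    * (`|det2 (aj - ai) (ak - ai)| / 2)
  <= du / (2 * sin (angle_at aj ak ai)) * (7 / 6 * (1 + (rT ai aj ak)^-1)).
Proof.
move=> D0 tmin0 tmax angI angJ angK vj01 uij uik ujk.
have [DJ DK] := det2_rot_neq0 D0; have [nJK nIJ] := norm2_gt0 DJ.
have dot_le := normr_dot2_grad_test_le_edges D0 (dot2_gt0_acute D0 tmin0 tmax angI)
  (dot2_gt0_acute DJ tmin0 tmax angJ) (dot2_gt0_acute DK tmin0 tmax angK) vj01 uij uik ujk.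
have [_ sJ] := cos_sin_angle_at DJ; rewrite det2_rot in sJ.
have [r0 _ _] := rT_edge_bounds D0.
set D := det2 (aj - ai) (ak - ai) in D0 dot_le sJ *; set r := rT ai aj ak in r0 dot_le *.
set eJK := norm2 (ak - aj) in nJK dot_le sJ; set eIJ := norm2 (ai - aj) in nIJ dot_le sJ.
have Dn : 0 < `|D| by rewrite normr_gt0.
rewrite sJ; apply: le_trans (ler_wpM2r _ dot_le) _; first by rewrite divr_ge0 ?ltW.
have -> : D ^+ 2 = `|D| ^+ 2 by rewrite real_normK // num_real.
have -> : du * (eJK * eIJ / r) / `|D| ^+ 2 * (`|D| / 2) =
    du * (eJK * eIJ / r) / (2 * `|D|) by field; rewrite !gt_eqF.
have -> : du / (2 * (`|D| / (eJK * eIJ))) * (7 / 6 * (1 + r^-1)) =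
    du * (eJK * eIJ * (7 / 6 * (1 + r^-1))) / (2 * `|D|) by field; rewrite !gt_eqF.
rewrite ler_pM2r ?invr_gt0 ?mulr_gt0 // ler_wpM2l ?(le_trans (normr_ge0 _) uij) //.
rewrite ler_wpM2l ?mulr_ge0 ?ltW //.
have : 0 < r^-1 by rewrite invr_gt0.
lra.
Qed.

End gradient_bounds.

Theorem lemma4p7 (R : realType) (Omega : set (R * R))
  (A : R * R -> R -> R * R -> R) (b : R * R -> R -> R)
  (gam_a K_eta B_eta t_min t_max : R)
  (ai aj ak : R * R) (wi wj wk ui uj uk : R) (zi zj zk : R -> R) :
  hypS Omega A b gam_a K_eta B_eta ->
  0 < t_min -> t_min <= t_max -> t_max < pi / 2 ->
  det2 (aj - ai) (ak - ai) != 0 ->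
  triangle ai aj ak `<=` Omega ->
  t_min <= angle_at ai aj ak <= t_max ->
  t_min <= angle_at aj ak ai <= t_max ->
  t_min <= angle_at ak ai aj <= t_max ->
  wj <= wi -> wk <= wj -> 0 < wi -> wk <= 0 ->
  let w := p1 ai aj ak wi wj wk in
  let u := p1 ai aj ak ui uj uk in
  let v := p1 ai aj ak (if 0 < wi then 1 else 0) (if 0 < wj then 1 else 0)
                       (if 0 < wk then 1 else 0) in
  let z := fun t : R => p1 ai aj ak (zi t) (zj t) (zk t) in
  let theta_j := angle_at aj ak ai in
  (((- (deltaT wi wj wk * deltaT ui uj uk) / (2 * sin theta_j))
     * (7 * K_eta / 6) * (1 + (rT ai aj ak)^-1))%R%:E
  <= \int[@leb2 R]_(x in triangle ai aj ak)
        \int[@lebesgue_measure R]_(t in `[0%R, 1%R])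
          (derive1 (fun e => A x e (grad2 u x)) (z t x) * w x
             * dot2 (grad2 u x) (grad2 v x))%:E)%E.
Proof.
move=> [[_ K0 _] _ _ hK] tmin0 _ tmax D0 Tsub angI angJ angK wji wkj wi0 wk0.
cbv zeta; set w := p1 ai aj ak wi wj wk; set u := p1 ai aj ak ui uj uk.
have vk0 : (0 < wk) = false by rewrite ltNge wk0.
rewrite wi0 vk0; set vj : R := if 0 < wj then 1 else 0.
have vj01 : vj = 0 \/ vj = 1 by rewrite /vj; case: ifP; [right | left].
set cc := dot2 (p1_grad ai aj ak ui uj uk) (p1_grad ai aj ak 1 vj 0).
have [dwij _ _] := deltaT_ge wi wj wk; have [duij duik dujk] := deltaT_ge ui uj uk.
have dw0 : 0 <= deltaT wi wj wk := le_trans (normr_ge0 _) dwij.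
pose M := K_eta * deltaT wi wj wk * `|cc|.
apply: le_trans (_ : (- (M * (`|det2 (aj - ai) (ak - ai)| / 2)))%:E <= _)%E.
  have geo := normr_dot2_grad_test_le D0 tmin0 tmax angI angJ angK vj01 duij duik dujk.
  rewrite lee_fin -lerN2 opprK /M -!mulrA.
  apply: le_trans (ler_wpM2l (ltW K0) (ler_wpM2l dw0 geo)) _.
  by rewrite le_eqVlt; apply/orP; left; apply/eqP; ring.
apply: integral_ge_lbound; first by rewrite !mulr_ge0 // ltW.
  case: hK => N [mN N0 hN]; exists N; split => // x /= hx; apply: hN => /= Px.
  apply: hx => Tx; have [_ [Kb _]] := Px (Tsub x Tx).
  have wx : `|w x| <= deltaT wi wj wk.
    by apply: normr_p1_le_deltaT Tx => //; apply/andP; split => //; exact: ltW.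
  refine (integral_itv01_lbound _) => t; rewrite /u !grad2_p1 // !normrM /M.
  by apply: ler_wpM2r => //; apply: ler_pM => //; exact: Kb.
by move=> B mB; exact: leb2_triangle_le D0 mB.
Qed.
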